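(* (Computing the weighted, repeated argument sum.) For complex numbers $x_0,\dots,x_q$ (repetitions allowed) and $\tau\in\mathbb{R}$, $$\sum_{j=0}^q x_j\,e^{-\tau[x_0,\ldots,x_q,x_j]}=\begin{cases}(-x_0\tau-q)\,e^{-\tau[x_0,\ldots,x_q]}-\tau\,e^{-\tau[x_1,\ldots,x_q]}, & q>0,\\ -\tau x_0e^{-\tau x_0}, & q=0.\end{cases}$$
   Context: For $t\in\mathbb{R}$ and numbers $y_0,\dots,y_p$ (repetitions allowed), $e^{t[y_0,\ldots,y_p]}$ denotes the divided difference of $f(x)=e^{tx}$, $f[y_0,\ldots,y_p]=\frac{1}{2\pi i}\oint_\Gamma\frac{f(x)}{\prod_{i=0}^p(x-y_i)}\,\mathrm{d}x$, $\Gamma$ a positively oriented contour enclosing all $y_i$. The multiset $[x_0,\ldots,x_q,x_j]$ contains $x_j$ twice. *)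

From Stdlib Require Import Reals List.
From Coquelicot Require Import Coquelicot.
Import ListNotations.
Open Scope C_scope.

Definition Cexp (z : C) : C :=
  (exp (fst z) * cos (snd z), exp (fst z) * sin (snd z))%R.

Definition node_prod (ys : list C) (z : C) : C :=
  fold_right (fun y acc => (z - y) * acc) 1 ys.

(* Radius of a circle centred at 0 enclosing all nodes strictly. *)
Definition enclosing_radius (ys : list C) : R :=
  (1 + fold_right (fun y acc => Cmod y + acc) 0 ys)%R.

(* Divided difference f[y_0,...,y_p] defined (as in the paper) by the contour
   integral (1/(2 pi i)) \oint_Gamma f(x) / prod_i (x - y_i) dx, where Gamma is the
   positively oriented circle |x| = r, r = enclosing_radius ys, parametrised by
   x = r e^{i theta}, theta in [0, 2 pi], dx = i r e^{i theta} d theta. *)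
Definition divdiff (f : C -> C) (ys : list C) : C :=
  let r := enclosing_radius ys in
  / (2 * RtoC PI * Ci) *
  RInt (V := C_R_CompleteNormedModule)
    (fun theta : R =>
       let z := RtoC r * Cexp (RtoC 0 + Ci * RtoC theta) in
       f z / node_prod ys z * (Ci * z))
    0 (2 * PI).

Definition exp_dd (t : R) (ys : list C) : C :=
  divdiff (fun x => Cexp (RtoC t * x)) ys.

Definition Csum (l : list C) : C := fold_right Cplus 0 l.

(** Write [e^{t[ys]}] as the contour integral of [K_ys(z) = e^{t z} / prod_(y in ys) (z - y)]
    over a circle enclosing the nodes; differentiating in the radius shows that every such
    circle gives the same value.  Appending the node [x_j] divides [K] by [z - x_j], and
    [sum_j x_j / (z - x_j) = z S(z) - (q + 1)], where [S = sum_j 1 / (z - x_j)] is the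
    logarithmic derivative of the node product.  Since [(z K)' = K ((t - S) z + 1)], the
    weighted sum of the integrands is [(t z - q) K - (z K)'], and the exact term integrates to
    zero around the circle.  Finally [z K_{x_0..x_q} = x_0 K_{x_0..x_q} + K_{x_1..x_q}], which
    yields [(t x_0 - q) e^{t[x_0..x_q]} + t e^{t[x_1..x_q]}], here with [t = -tau].
    For [q = 0] this leaves [t e^{t[]} = 0] (the integrand [t e^{t z} dz] is exact) and the
    Cauchy formula [e^{t[a]} = e^{t a}], obtained by moving the node [a] to [0] and then
    shrinking the circle to a point. *)

From Stdlib Require Import Reals List Lra.
From Coquelicot Require Import Coquelicot.
Import ListNotations.
Open Scope C_scope.

(* Turns a goal [P l] into [P ?l'] and [?l' = l], so that a derivative or an integral can be
   computed first and identified with the expected value afterwards. *)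
Ltac with_eq_value := lazymatch goal with |- ?P ?l => refine (eq_ind _ P _ l _) end.

(** * Calculus of complex-valued functions of real variables *)

Lemma Cnorm2_neq0 (z : C) : z <> 0 -> (fst z ^ 2 + snd z ^ 2 <> 0)%R.
Proof. intros Hz E. apply Hz, Cmod_eq_0. unfold Cmod. rewrite E. apply sqrt_0. Qed.

Definition is_derive_C (f : R -> C) (x : R) (l : C) : Prop :=
  is_derive (fun t => fst (f t)) x (fst l) /\ is_derive (fun t => snd (f t)) x (snd l).

Lemma is_derive_C_const (c : C) x : is_derive_C (fun _ => c) x 0.
Proof. split; exact (is_derive_const _ _). Qed.

Lemma is_derive_C_RtoC x : is_derive_C RtoC x 1.
Proof. split; [exact (is_derive_id _) | exact (is_derive_const _ _)]. Qed.

Lemma is_derive_C_plus f g x a b : is_derive_C f x a -> is_derive_C g x b ->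
  is_derive_C (fun t => f t + g t) x (a + b).
Proof.
  intros [Hf1 Hf2] [Hg1 Hg2].
  split; [exact (is_derive_plus _ _ _ _ _ Hf1 Hg1) | exact (is_derive_plus _ _ _ _ _ Hf2 Hg2)].
Qed.

Lemma is_derive_C_opp f x a : is_derive_C f x a -> is_derive_C (fun t => - f t) x (- a).
Proof. intros [Hf1 Hf2]; split; [exact (is_derive_opp _ _ _ Hf1) | exact (is_derive_opp _ _ _ Hf2)]. Qed.

Lemma is_derive_C_minus f g x a b : is_derive_C f x a -> is_derive_C g x b ->
  is_derive_C (fun t => f t - g t) x (a - b).
Proof. intros Hf Hg. apply is_derive_C_plus; [exact Hf | now apply is_derive_C_opp]. Qed.

Lemma is_derive_C_mult f g x a b : is_derive_C f x a -> is_derive_C g x b ->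
  is_derive_C (fun t => f t * g t) x (a * g x + f x * b).
Proof.
  intros [Hf1 Hf2] [Hg1 Hg2]; split; with_eq_value.
  - exact (is_derive_minus _ _ _ _ _ (is_derive_mult _ _ _ _ _ Hf1 Hg1 Rmult_comm)
                                      (is_derive_mult _ _ _ _ _ Hf2 Hg2 Rmult_comm)).
  - simpl. unfold minus, plus, opp, mult; simpl. ring.
  - exact (is_derive_plus _ _ _ _ _ (is_derive_mult _ _ _ _ _ Hf1 Hg2 Rmult_comm)
                                     (is_derive_mult _ _ _ _ _ Hf2 Hg1 Rmult_comm)).
  - simpl. unfold plus, mult; simpl. ring.
Qed.

Lemma is_derive_C_Cexp f x a : is_derive_C f x a ->
  is_derive_C (fun t => Cexp (f t)) x (a * Cexp (f x)).
Proof.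
  intros [Hf1 Hf2].
  assert (He := is_derive_comp exp _ x _ _ (is_derive_exp (fst (f x))) Hf1).
  split; with_eq_value.
  - exact (is_derive_mult _ _ _ _ _ He (is_derive_comp cos _ _ _ _ (is_derive_cos _) Hf2) Rmult_comm).
  - simpl. unfold plus, mult, scal; simpl. unfold mult; simpl. ring.
  - exact (is_derive_mult _ _ _ _ _ He (is_derive_comp sin _ _ _ _ (is_derive_sin _) Hf2) Rmult_comm).
  - simpl. unfold plus, mult, scal; simpl. unfold mult; simpl. ring.
Qed.

Lemma is_derive_C_inv f x a : is_derive_C f x a -> f x <> 0 ->
  is_derive_C (fun t => / f t) x (- a / (f x * f x)).
Proof.
  intros [Hf1 Hf2] Hn. assert (HN := Cnorm2_neq0 _ Hn).
  assert (HdN := is_derive_plus _ _ _ _ _ (is_derive_pow _ 2 _ _ Hf1) (is_derive_pow _ 2 _ _ Hf2)).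
  split; with_eq_value.
  1: exact (is_derive_div _ _ _ _ _ Hf1 HdN HN).
  2: exact (is_derive_div _ _ _ _ _ (is_derive_opp _ _ _ Hf2) HdN HN).
  all: simpl; unfold plus, opp; simpl.
  all: set (p := fst (f x)) in *; set (q := snd (f x)) in *.
  all: field; repeat split; intros E; apply HN; nra.
Qed.

Lemma is_derive_C_div f g x a b : is_derive_C f x a -> is_derive_C g x b -> g x <> 0 ->
  is_derive_C (fun t => f t / g t) x ((a * g x - f x * b) / (g x * g x)).
Proof.
  intros Hf Hg Hn. with_eq_value.
  - exact (is_derive_C_mult f (fun t => / g t) _ _ _ Hf (is_derive_C_inv g x b Hg Hn)).
  - cbv beta. field. exact Hn.
Qed.

Definition continuity_2d_pt_C (F : R -> R -> C) (x y : R) : Prop :=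
  continuity_2d_pt (fun u v => fst (F u v)) x y /\ continuity_2d_pt (fun u v => snd (F u v)) x y.

Lemma continuity_2d_pt_C_const (c : C) x y : continuity_2d_pt_C (fun _ _ => c) x y.
Proof. split; apply continuity_2d_pt_const. Qed.

Lemma continuity_2d_pt_C_RtoC (r : R -> R -> R) x y :
  continuity_2d_pt r x y -> continuity_2d_pt_C (fun u v => RtoC (r u v)) x y.
Proof. intros Hr; split; [exact Hr | exact (continuity_2d_pt_const x y 0)]. Qed.

Lemma continuity_2d_pt_C_plus F G x y : continuity_2d_pt_C F x y -> continuity_2d_pt_C G x y ->
  continuity_2d_pt_C (fun u v => F u v + G u v) x y.
Proof. intros [HF1 HF2] [HG1 HG2]; split; now apply continuity_2d_pt_plus. Qed.

Lemma continuity_2d_pt_C_opp F x y : continuity_2d_pt_C F x y ->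
  continuity_2d_pt_C (fun u v => - F u v) x y.
Proof. intros [HF1 HF2]; split; now apply continuity_2d_pt_opp. Qed.

Lemma continuity_2d_pt_C_minus F G x y : continuity_2d_pt_C F x y -> continuity_2d_pt_C G x y ->
  continuity_2d_pt_C (fun u v => F u v - G u v) x y.
Proof. intros HF HG. apply continuity_2d_pt_C_plus; [exact HF | now apply continuity_2d_pt_C_opp]. Qed.

Lemma continuity_2d_pt_C_mult F G x y : continuity_2d_pt_C F x y -> continuity_2d_pt_C G x y ->
  continuity_2d_pt_C (fun u v => F u v * G u v) x y.
Proof.
  intros [HF1 HF2] [HG1 HG2]; split; simpl.
  - apply continuity_2d_pt_minus; now apply continuity_2d_pt_mult.
  - apply continuity_2d_pt_plus; now apply continuity_2d_pt_mult.
Qed.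

Lemma continuity_2d_pt_C_Cexp F x y : continuity_2d_pt_C F x y ->
  continuity_2d_pt_C (fun u v => Cexp (F u v)) x y.
Proof.
  intros [HF1 HF2].
  assert (He := continuity_1d_2d_pt_comp exp _ x y (derivable_continuous_pt _ _ (derivable_pt_exp _)) HF1).
  split; simpl; apply continuity_2d_pt_mult; auto.
  - exact (continuity_1d_2d_pt_comp cos _ x y (derivable_continuous_pt _ _ (derivable_pt_cos _)) HF2).
  - exact (continuity_1d_2d_pt_comp sin _ x y (derivable_continuous_pt _ _ (derivable_pt_sin _)) HF2).
Qed.

Lemma continuity_2d_pt_C_inv F x y : continuity_2d_pt_C F x y -> F x y <> 0 ->
  continuity_2d_pt_C (fun u v => / F u v) x y.
Proof.
  intros [HF1 HF2] Hn.
  assert (HcN : continuity_2d_pt (fun u v => fst (F u v) ^ 2 + snd (F u v) ^ 2)%R x y).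
  { apply continuity_2d_pt_plus; simpl; apply continuity_2d_pt_mult; auto;
      apply continuity_2d_pt_mult; auto; apply continuity_2d_pt_const. }
  assert (HiN := continuity_2d_pt_inv _ x y HcN (Cnorm2_neq0 _ Hn)).
  split; simpl; apply continuity_2d_pt_mult; auto.
  now apply continuity_2d_pt_opp.
Qed.

Lemma continuity_2d_pt_C_div F G x y : continuity_2d_pt_C F x y -> continuity_2d_pt_C G x y ->
  G x y <> 0 -> continuity_2d_pt_C (fun u v => F u v / G u v) x y.
Proof.
  intros HF HG Hn.
  exact (continuity_2d_pt_C_mult F (fun u v => / G u v) x y HF (continuity_2d_pt_C_inv G x y HG Hn)).
Qed.

Definition continuity_pt_C (f : R -> C) (t : R) : Prop :=
  continuity_pt (fun s => fst (f s)) t /\ continuity_pt (fun s => snd (f s)) t.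

Lemma continuity_2d_pt_slice (f : R -> R -> R) x y :
  continuity_2d_pt f x y -> continuity_pt (f x) y.
Proof.
  intros Hf. apply continuity_pt_locally. intros eps.
  destruct (Hf eps) as [d Hd]. exists d. intros v Hv.
  apply Hd; [rewrite Rminus_eq_0, Rabs_R0; apply cond_pos | exact Hv].
Qed.

Lemma continuity_pt_C_slice F x y : continuity_2d_pt_C F x y -> continuity_pt_C (F x) y.
Proof. intros [HF1 HF2]; split; now apply (continuity_2d_pt_slice (fun u v => _ (F u v))). Qed.

(** * Integrals over a period *)

Lemma ex_RInt_C (f : R -> C) a b : (forall t, continuity_pt_C f t) ->
  ex_RInt (V := C_R_NormedModule) f a b.
Proof.
  intros Hf. eexists. apply is_RInt_fct_extend_pair;
    apply (RInt_correct (V := R_CompleteNormedModule)), ex_RInt_continuous;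
    intros t _; apply continuity_pt_filterlim, Hf.
Qed.

Lemma is_RInt_C_derive (F f : R -> C) a b :
  (forall t, is_derive_C F t (f t)) -> (forall t, continuity_pt_C f t) ->
  is_RInt (V := C_R_NormedModule) f a b (F b - F a).
Proof.
  intros HF Hf. apply is_RInt_fct_extend_pair.
  - exact (is_RInt_derive (fun t => fst (F t)) (fun t => fst (f t)) a b (fun t _ => proj1 (HF t))
             (fun t _ => proj1 (continuity_pt_filterlim _ _) (proj1 (Hf t)))).
  - exact (is_RInt_derive (fun t => snd (F t)) (fun t => snd (f t)) a b (fun t _ => proj2 (HF t))
             (fun t _ => proj1 (continuity_pt_filterlim _ _) (proj2 (Hf t)))).
Qed.

Lemma is_RInt_C_scal (f : R -> C) a b (c l : C) : is_RInt (V := C_R_NormedModule) f a b l ->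
  is_RInt (V := C_R_NormedModule) (fun t => c * f t) a b (c * l).
Proof.
  intros Hf.
  assert (H1 := is_RInt_fct_extend_fst f a b l Hf).
  assert (H2 := is_RInt_fct_extend_snd f a b l Hf).
  apply is_RInt_fct_extend_pair.
  - exact (is_RInt_minus _ _ a b _ _ (is_RInt_scal _ a b (fst c) _ H1) (is_RInt_scal _ a b (snd c) _ H2)).
  - exact (is_RInt_plus _ _ a b _ _ (is_RInt_scal _ a b (fst c) _ H2) (is_RInt_scal _ a b (snd c) _ H1)).
Qed.

Definition loop_integral (f : R -> C) : C := RInt (V := C_R_CompleteNormedModule) f 0 (2 * PI).

Lemma loop_integral_ext f g : (forall t, f t = g t) -> loop_integral f = loop_integral g.
Proof. intros E. apply (RInt_ext (V := C_R_CompleteNormedModule)). intros t _. apply E. Qed.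

Lemma loop_integral_plus f g : (forall t, continuity_pt_C f t) -> (forall t, continuity_pt_C g t) ->
  loop_integral (fun t => f t + g t) = loop_integral f + loop_integral g.
Proof. intros Hf Hg. exact (RInt_plus (V := C_R_CompleteNormedModule) f g _ _ (ex_RInt_C f _ _ Hf) (ex_RInt_C g _ _ Hg)). Qed.

Lemma loop_integral_minus f g : (forall t, continuity_pt_C f t) -> (forall t, continuity_pt_C g t) ->
  loop_integral (fun t => f t - g t) = loop_integral f - loop_integral g.
Proof. intros Hf Hg. exact (RInt_minus (V := C_R_CompleteNormedModule) f g _ _ (ex_RInt_C f _ _ Hf) (ex_RInt_C g _ _ Hg)). Qed.

Lemma loop_integral_scal (c : C) f : (forall t, continuity_pt_C f t) ->
  loop_integral (fun t => c * f t) = c * loop_integral f.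
Proof.
  intros Hf. unfold loop_integral.
  apply (is_RInt_unique (V := C_R_CompleteNormedModule)), is_RInt_C_scal.
  exact (RInt_correct (V := C_R_CompleteNormedModule) _ _ _ (ex_RInt_C f _ _ Hf)).
Qed.

Lemma loop_integral_Csum (F : C -> R -> C) (l : list C) :
  (forall y t, In y l -> continuity_pt_C (F y) t) ->
  loop_integral (fun t => Csum (map (fun y => F y t) l)) = Csum (map (fun y => loop_integral (F y)) l).
Proof.
  intros HF. unfold loop_integral. apply (is_RInt_unique (V := C_R_CompleteNormedModule)). induction l as [|y l IH]; simpl.
  - with_eq_value; [exact (is_RInt_const _ _ _) | ].
    apply injective_projections; simpl; unfold scal; simpl; unfold mult; simpl; ring.
  - refine (is_RInt_plus (V := C_R_NormedModule) _ _ _ _ _ _ _ (IH _)).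
    + apply (RInt_correct (V := C_R_CompleteNormedModule)), ex_RInt_C. intros t. apply HF. now left.
    + intros z t Hz. apply HF. now right.
Qed.

Lemma loop_integral_derive_periodic (F f : R -> C) :
  (forall t, is_derive_C F t (f t)) -> (forall t, continuity_pt_C f t) -> F 0%R = F (2 * PI)%R ->
  loop_integral f = 0.
Proof.
  intros HF Hf Hper. unfold loop_integral. apply (is_RInt_unique (V := C_R_CompleteNormedModule)).
  with_eq_value; [exact (is_RInt_C_derive F f _ _ HF Hf) | rewrite Hper; apply Cplus_opp_r].
Qed.

Lemma loop_integral_components f : (forall t, continuity_pt_C f t) ->
  loop_integral f = (RInt (fun t => fst (f t)) 0 (2 * PI), RInt (fun t => snd (f t)) 0 (2 * PI)).
Proof.
  intros Hf. apply (is_RInt_unique (V := C_R_CompleteNormedModule)), is_RInt_fct_extend_pair;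
    apply (RInt_correct (V := R_CompleteNormedModule)), ex_RInt_continuous;
    intros t _; apply continuity_pt_filterlim, Hf.
Qed.

Lemma RInt_param_const (f df : R -> R -> R) (al be lo hi a b : R) :
  (forall u t, (al < u < be)%R -> is_derive (fun s => f s t) u (df u t)) ->
  (forall u t, (al < u < be)%R -> continuity_2d_pt df u t) ->
  (forall u t, (al < u < be)%R -> continuity_pt (f u) t) ->
  (forall u, (al < u < be)%R -> RInt (df u) lo hi = 0%R) ->
  (al < a < be)%R -> (al < b < be)%R -> RInt (f a) lo hi = RInt (f b) lo hi.
Proof.
  intros Hd Hdc Hc H0 Ha Hb.
  assert (Hloc : forall u, (al < u < be)%R -> locally u (fun y => al < y < be)%R).
  { apply (locally_open (fun y => al < y < be)%R); [|easy].
    apply open_and; [apply open_gt | apply open_lt]. }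
  assert (Hderiv : forall u, (al < u < be)%R -> is_derive (fun s => RInt (f s) lo hi) u 0%R).
  { intros u Hu. rewrite <- (H0 u Hu).
    rewrite (RInt_ext (df u) (fun t => Derive (fun s => f s t) u))
      by (intros t _; symmetry; apply is_derive_unique, Hd, Hu).
    apply is_derive_RInt_param.
    - apply (filter_imp _ _ (fun y Hy t _ => ex_intro _ _ (Hd y t Hy)) (Hloc u Hu)).
    - intros t _. apply (continuity_2d_pt_ext_loc df); [|exact (Hdc u t Hu)].
      destruct (Hloc u Hu) as [eps He]. exists eps. intros u' v Hu' _.
      symmetry. apply is_derive_unique, Hd, He, Hu'.
    - apply (filter_imp _ _ (fun y Hy => ex_RInt_continuous _ _ _
        (fun t _ => proj1 (continuity_pt_filterlim _ _) (Hc y t Hy))) (Hloc u Hu)). }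
  assert (Hmono : forall a b, (al < a)%R -> (a < b)%R -> (b < be)%R ->
    RInt (f a) lo hi = RInt (f b) lo hi).
  { intros a' b' Ha' Hab Hb'.
    exact (eq_is_derive (fun s => RInt (f s) lo hi) a' b' (fun t Ht => Hderiv t ltac:(lra)) Hab). }
  destruct (Rtotal_order a b) as [Hab | [-> | Hab]];
    [apply Hmono | reflexivity | symmetry; apply Hmono]; lra.
Qed.

Lemma loop_integral_param_const (h dh : R -> R -> C) (al be a b : R) :
  (forall u t, (al < u < be)%R -> is_derive_C (fun s => h s t) u (dh u t)) ->
  (forall u t, (al < u < be)%R -> continuity_2d_pt_C dh u t) ->
  (forall u t, (al < u < be)%R -> continuity_pt_C (h u) t) ->
  (forall u, (al < u < be)%R -> loop_integral (dh u) = 0) ->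
  (al < a < be)%R -> (al < b < be)%R -> loop_integral (h a) = loop_integral (h b).
Proof.
  intros Hd Hdc Hc H0 Ha Hb.
  assert (Hdc' : forall u t, (al < u < be)%R -> continuity_pt_C (dh u) t)
    by (intros u t Hu; apply continuity_pt_C_slice, Hdc, Hu).
  assert (H0' : forall u, (al < u < be)%R ->
    RInt (fun t => fst (dh u t)) 0 (2 * PI) = 0%R /\ RInt (fun t => snd (dh u t)) 0 (2 * PI) = 0%R).
  { intros u Hu. assert (E := H0 u Hu). rewrite loop_integral_components in E
      by (intros t; apply Hdc', Hu). now injection E. }
  rewrite !loop_integral_components by (intros t; apply Hc; assumption).
  f_equal.
  - exact (RInt_param_const _ _ al be _ _ a b (fun u t Hu => proj1 (Hd u t Hu))
      (fun u t Hu => proj1 (Hdc u t Hu)) (fun u t Hu => proj1 (Hc u t Hu)) (fun u Hu => proj1 (H0' u Hu)) Ha Hb).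
  - exact (RInt_param_const _ _ al be _ _ a b (fun u t Hu => proj2 (Hd u t Hu))
      (fun u t Hu => proj2 (Hdc u t Hu)) (fun u t Hu => proj2 (Hc u t Hu)) (fun u Hu => proj2 (H0' u Hu)) Ha Hb).
Qed.

(** * Circles and nodes *)

Lemma Cexp_add u v : Cexp (u + v) = Cexp u * Cexp v.
Proof. unfold Cexp; simpl. rewrite exp_plus, cos_plus, sin_plus. apply injective_projections; simpl; ring. Qed.

Lemma Cexp_0 : Cexp 0 = 1.
Proof. unfold Cexp; simpl. rewrite exp_0, cos_0, sin_0. apply injective_projections; simpl; ring. Qed.

Lemma Cexp_i th : Cexp (RtoC 0 + Ci * RtoC th) = (cos th, sin th).
Proof.
  unfold Cexp; simpl.
  replace (0 + (0 * th - 1 * 0))%R with 0%R by ring.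
  replace (0 + (0 * 0 + 1 * th))%R with th by ring.
  rewrite exp_0. apply injective_projections; simpl; ring.
Qed.

Definition circle (r th : R) : C := RtoC r * Cexp (RtoC 0 + Ci * RtoC th).

Lemma circle_0 th : circle 0 th = 0.
Proof. unfold circle. ring. Qed.

Lemma circle_scale r th : circle r th = RtoC r * circle 1 th.
Proof. unfold circle. ring. Qed.

Lemma circle_periodic r : circle r 0 = circle r (2 * PI).
Proof.
  unfold circle. rewrite !Cexp_i, cos_0, sin_0, cos_2PI, sin_2PI. reflexivity.
Qed.

Lemma Cmod_circle r th : Cmod (circle r th) = Rabs r.
Proof.
  unfold circle. rewrite Cmod_mult, Cmod_R.
  replace (Cmod _) with 1%R; [ring|].
  rewrite Cexp_i. unfold Cmod; cbn [fst snd]. rewrite <- sqrt_1. f_equal.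
  pose proof (sin2_cos2 th) as E. unfold Rsqr in E. nra.
Qed.

Lemma is_derive_C_circle_angle r th : is_derive_C (circle r) th (Ci * circle r th).
Proof.
  unfold circle. with_eq_value.
  - apply (is_derive_C_mult (fun _ => RtoC r)); [apply is_derive_C_const|].
    apply (is_derive_C_Cexp (fun s => RtoC 0 + Ci * RtoC s)).
    apply (is_derive_C_plus (fun _ => RtoC 0)); [apply is_derive_C_const|].
    apply (is_derive_C_mult (fun _ => Ci)); [apply is_derive_C_const | apply is_derive_C_RtoC].
  - cbv beta. ring.
Qed.

Lemma is_derive_C_circle_radius r th : is_derive_C (fun s => circle s th) r (circle 1 th).
Proof.
  unfold circle. with_eq_value.
  - apply (is_derive_C_mult RtoC); [apply is_derive_C_RtoC | apply is_derive_C_const].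
  - cbv beta. ring.
Qed.

Lemma continuity_2d_pt_C_circle (r th : R -> R -> R) x y :
  continuity_2d_pt r x y -> continuity_2d_pt th x y ->
  continuity_2d_pt_C (fun u v => circle (r u v) (th u v)) x y.
Proof.
  intros Hr Hth. unfold circle.
  apply continuity_2d_pt_C_mult; [now apply continuity_2d_pt_C_RtoC|].
  apply continuity_2d_pt_C_Cexp, continuity_2d_pt_C_plus; [apply continuity_2d_pt_C_const|].
  apply continuity_2d_pt_C_mult; [apply continuity_2d_pt_C_const | now apply continuity_2d_pt_C_RtoC].
Qed.

Definition off_nodes (ys : list C) (z : C) : Prop := forall y, In y ys -> z - y <> 0.

Definition encloses (r : R) (ys : list C) : Prop := forall y, In y ys -> (Cmod y < r)%R.

Lemma encloses_off_nodes r th ys : encloses r ys -> off_nodes ys (circle r th).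
Proof.
  intros Hr y Hy. apply Cminus_eq_contra. intros E.
  specialize (Hr y Hy). rewrite <- E, Cmod_circle in Hr.
  pose proof (Rle_abs r). lra.
Qed.

Lemma encloses_enclosing_radius ys : encloses (enclosing_radius ys) ys.
Proof.
  unfold enclosing_radius.
  assert (H : (0 <= fold_right (fun y acc => Cmod y + acc) 0 ys)%R /\
    forall y, In y ys -> (Cmod y <= fold_right (fun y acc => Cmod y + acc) 0 ys)%R).
  { induction ys as [|a ys [IH0 IH]]; simpl; split; try easy.
    - pose proof (Cmod_ge_0 a). lra.
    - intros y [<- | Hy]; [lra|]. specialize (IH y Hy). pose proof (Cmod_ge_0 a). lra. }
  intros y Hy. pose proof (proj2 H y Hy). lra.
Qed.

Lemma encloses_smaller r ys : encloses r ys -> exists r', (r' < r)%R /\ encloses r' ys.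
Proof.
  induction ys as [|a ys IH]; intros Hr.
  - exists (r - 1)%R. split; [lra | easy].
  - destruct IH as [r' [Hr' Henc]]; [intros y Hy; apply Hr; now right|].
    assert (Ha : (Cmod a < r)%R) by (apply Hr; now left).
    exists (Rmax r' ((Cmod a + r) / 2)). split.
    + apply Rmax_lub_lt; lra.
    + intros y [<- | Hy].
      * eapply Rlt_le_trans, Rmax_r. lra.
      * eapply Rlt_le_trans, Rmax_l. now apply Henc.
Qed.

Lemma node_prod_app l1 l2 z : node_prod (l1 ++ l2) z = node_prod l1 z * node_prod l2 z.
Proof. unfold node_prod. induction l1 as [|y l1 IH]; simpl; [ring | rewrite IH; ring]. Qed.

Lemma node_prod_neq0 ys z : off_nodes ys z -> node_prod ys z <> 0.
Proof.
  induction ys as [|y ys IH]; intros Hz; simpl.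
  - apply C1_nz.
  - apply Cmult_neq_0; [apply Hz; now left | apply IH; intros w Hw; apply Hz; now right].
Qed.

Definition node_logderiv (ys : list C) (z : C) : C := Csum (map (fun y => / (z - y)) ys).

Lemma is_derive_C_node_prod ys g x g' : is_derive_C g x g' -> off_nodes ys (g x) ->
  is_derive_C (fun s => node_prod ys (g s)) x (g' * node_prod ys (g x) * node_logderiv ys (g x)).
Proof.
  intros Hg. induction ys as [|y ys IH]; intros Hoff; with_eq_value.
  - exact (is_derive_C_const 1 x).
  - unfold node_logderiv; simpl. ring.
  - refine (is_derive_C_mult (fun s => g s - y) (fun s => node_prod ys (g s)) x _ _ _ (IH _)).
    + exact (is_derive_C_minus g (fun _ => y) x _ _ Hg (is_derive_C_const y x)).
    + intros w Hw. apply Hoff. now right.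
  - assert (Hy : g x - y <> 0) by (apply Hoff; now left).
    unfold node_logderiv; simpl. fold (node_prod ys (g x)). field. exact Hy.
Qed.

Lemma continuity_2d_pt_C_node_prod ys (Z : R -> R -> C) x y : continuity_2d_pt_C Z x y ->
  continuity_2d_pt_C (fun u v => node_prod ys (Z u v)) x y.
Proof.
  intros HZ. induction ys as [|a ys IH]; [exact (continuity_2d_pt_C_const 1 x y)|].
  apply (continuity_2d_pt_C_mult (fun u v => Z u v - a)); [|exact IH].
  apply continuity_2d_pt_C_minus; [exact HZ | apply continuity_2d_pt_C_const].
Qed.

Lemma continuity_2d_pt_C_node_logderiv ys (Z : R -> R -> C) x y : continuity_2d_pt_C Z x y ->
  off_nodes ys (Z x y) -> continuity_2d_pt_C (fun u v => node_logderiv ys (Z u v)) x y.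
Proof.
  intros HZ. induction ys as [|a ys IH]; intros Hoff; [exact (continuity_2d_pt_C_const 0 x y)|].
  apply (continuity_2d_pt_C_plus (fun u v => / (Z u v - a))).
  - apply (continuity_2d_pt_C_inv (fun u v => Z u v - a)); [|apply Hoff; now left].
    apply continuity_2d_pt_C_minus; [exact HZ | apply continuity_2d_pt_C_const].
  - apply IH. intros w Hw. apply Hoff. now right.
Qed.

Definition dd_kernel (t : R) (ys : list C) (z : C) : C := Cexp (RtoC t * z) / node_prod ys z.

Definition dd_integrand (t : R) (ys : list C) (r th : R) : C :=
  dd_kernel t ys (circle r th) * (Ci * circle r th).

Lemma is_derive_C_dd_kernel t ys g x g' : is_derive_C g x g' -> off_nodes ys (g x) ->
  is_derive_C (fun s => dd_kernel t ys (g s)) x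
    (g' * dd_kernel t ys (g x) * (RtoC t - node_logderiv ys (g x))).
Proof.
  intros Hg Hoff. assert (HP := node_prod_neq0 ys (g x) Hoff). unfold dd_kernel. with_eq_value.
  - apply (is_derive_C_div (fun s => Cexp (RtoC t * g s)) (fun s => node_prod ys (g s))); [| |exact HP].
    + apply (is_derive_C_Cexp (fun s => RtoC t * g s)), (is_derive_C_mult (fun _ => RtoC t) g);
        [exact (is_derive_C_const _ _) | exact Hg].
    + exact (is_derive_C_node_prod ys g x g' Hg Hoff).
  - cbv beta. field. exact HP.
Qed.

Lemma continuity_2d_pt_C_dd_kernel t ys Z x y : continuity_2d_pt_C Z x y -> off_nodes ys (Z x y) ->
  continuity_2d_pt_C (fun u v => dd_kernel t ys (Z u v)) x y.
Proof.
  intros HZ Hoff. unfold dd_kernel.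
  apply (continuity_2d_pt_C_div (fun u v => Cexp (RtoC t * Z u v)) (fun u v => node_prod ys (Z u v))).
  - apply (continuity_2d_pt_C_Cexp (fun u v => RtoC t * Z u v)), (continuity_2d_pt_C_mult (fun _ _ => RtoC t));
      [exact (continuity_2d_pt_C_const _ x y) | exact HZ].
  - now apply continuity_2d_pt_C_node_prod.
  - now apply node_prod_neq0.
Qed.

Ltac derive_C :=
  lazymatch goal with
  | |- is_derive_C (fun _ => ?c) ?x _ => exact (is_derive_C_const c x)
  | |- is_derive_C (fun s => RtoC s) _ _ => apply is_derive_C_RtoC
  | |- is_derive_C (fun s => @?f s + @?g s) _ _ => apply (is_derive_C_plus f g); derive_C
  | |- is_derive_C (fun s => @?f s - @?g s) _ _ => apply (is_derive_C_minus f g); derive_C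
  | |- is_derive_C (fun s => - @?f s) _ _ => apply (is_derive_C_opp f); derive_C
  | |- is_derive_C (fun s => @?f s * @?g s) _ _ => apply (is_derive_C_mult f g); derive_C
  | |- is_derive_C (fun s => @?f s / @?g s) _ _ => apply (is_derive_C_div f g); derive_C
  | |- is_derive_C (fun s => / @?f s) _ _ => apply (is_derive_C_inv f); derive_C
  | |- is_derive_C (fun s => Cexp (@?f s)) _ _ => apply (is_derive_C_Cexp f); derive_C
  | |- is_derive_C (fun s => circle ?r s) _ _ => apply is_derive_C_circle_angle
  | |- is_derive_C (fun s => circle s ?th) _ _ => apply is_derive_C_circle_radius
  | |- is_derive_C (fun s => dd_kernel ?t ?ys (@?g s)) _ _ =>
      apply (is_derive_C_dd_kernel t ys g); derive_C
  | |- _ => idtac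
  end.

Ltac continuity_R :=
  first [ apply continuity_2d_pt_id1 | apply continuity_2d_pt_id2 | apply continuity_2d_pt_const ].

Ltac continuity_C :=
  cbv beta;
  lazymatch goal with
  | |- continuity_2d_pt_C (fun _ _ => ?c) ?x ?y => exact (continuity_2d_pt_C_const c x y)
  | |- continuity_2d_pt_C (fun u v => RtoC (@?r u v)) _ _ =>
      apply (continuity_2d_pt_C_RtoC r); continuity_R
  | |- continuity_2d_pt_C (fun u v => @?F u v + @?G u v) _ _ =>
      apply (continuity_2d_pt_C_plus F G); continuity_C
  | |- continuity_2d_pt_C (fun u v => @?F u v - @?G u v) _ _ =>
      apply (continuity_2d_pt_C_minus F G); continuity_C
  | |- continuity_2d_pt_C (fun u v => - @?F u v) _ _ => apply (continuity_2d_pt_C_opp F); continuity_C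
  | |- continuity_2d_pt_C (fun u v => @?F u v * @?G u v) _ _ =>
      apply (continuity_2d_pt_C_mult F G); continuity_C
  | |- continuity_2d_pt_C (fun u v => @?F u v / @?G u v) _ _ =>
      apply (continuity_2d_pt_C_div F G); continuity_C
  | |- continuity_2d_pt_C (fun u v => / @?F u v) _ _ => apply (continuity_2d_pt_C_inv F); continuity_C
  | |- continuity_2d_pt_C (fun u v => Cexp (@?F u v)) _ _ => apply (continuity_2d_pt_C_Cexp F); continuity_C
  | |- continuity_2d_pt_C (fun u v => circle (@?r u v) (@?th u v)) _ _ =>
      apply (continuity_2d_pt_C_circle r th); continuity_R
  | |- continuity_2d_pt_C (fun u v => node_logderiv ?ys (@?Z u v)) _ _ =>
      apply (continuity_2d_pt_C_node_logderiv ys Z); continuity_C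
  | |- continuity_2d_pt_C (fun u v => dd_kernel ?t ?ys (@?Z u v)) _ _ =>
      apply (continuity_2d_pt_C_dd_kernel t ys Z); continuity_C
  | |- continuity_2d_pt_C (fun u v => dd_integrand _ _ _ _) _ _ => unfold dd_integrand; continuity_C
  | |- _ => idtac
  end.

Ltac continuity_C1 :=
  lazymatch goal with
  | |- continuity_pt_C ?f ?t => apply (continuity_pt_C_slice (fun _ s => f s) 0 t); continuity_C
  end.

(** * Divided differences of the exponential *)

Lemma loop_integral_dd_integrand_radius t ys r1 r2 : encloses r1 ys -> encloses r2 ys ->
  loop_integral (dd_integrand t ys r1) = loop_integral (dd_integrand t ys r2).
Proof.
  intros H1 H2.
  destruct (encloses_smaller (Rmin r1 r2) ys) as [al [Hal Hencl]].
  { unfold Rmin. now destruct Rle_dec. }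
  assert (Hoff : forall u th, (al < u)%R -> off_nodes ys (circle u th)).
  { intros u th Hu. apply encloses_off_nodes. intros y Hy. specialize (Hencl y Hy). lra. }
  (* The radial derivative of the integrand is the angular derivative of [K(z) e^{i th}]. *)
  apply (loop_integral_param_const _
    (fun u th => Ci * circle 1 th * dd_kernel t ys (circle u th) *
                 ((RtoC t - node_logderiv ys (circle u th)) * circle u th + 1))
    al (Rmax r1 r2 + 1)).
  - intros u th Hu. unfold dd_integrand. with_eq_value; [derive_C | ].
    + apply Hoff. lra.
    + cbv beta. ring.
  - intros u th Hu. continuity_C; apply Hoff; lra.
  - intros u th Hu. continuity_C1; apply Hoff; lra.
  - intros u Hu.
    apply (loop_integral_derive_periodic (fun th => dd_kernel t ys (circle u th) * circle 1 th)).
    + intros th. with_eq_value; [derive_C | ].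
      * apply Hoff. lra.
      * cbv beta. ring.
    + intros th. continuity_C1; apply Hoff; lra.
    + now rewrite !circle_periodic.
  - pose proof (Rmin_l r1 r2). pose proof (Rmax_l r1 r2). lra.
  - pose proof (Rmin_r r1 r2). pose proof (Rmax_r r1 r2). lra.
Qed.

Lemma exp_dd_radius t ys r : encloses r ys ->
  exp_dd t ys = / (2 * RtoC PI * Ci) * loop_integral (dd_integrand t ys r).
Proof.
  intros Hr. change (exp_dd t ys) with
    (/ (2 * RtoC PI * Ci) * loop_integral (dd_integrand t ys (enclosing_radius ys))).
  rewrite (loop_integral_dd_integrand_radius t ys _ r); auto using encloses_enclosing_radius.
Qed.

Lemma Csum_map_scal (c : C) (f : C -> C) l : Csum (map (fun y => c * f y) l) = c * Csum (map f l).
Proof. unfold Csum. induction l as [|y l IH]; simpl; [ring | rewrite IH; ring]. Qed.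

Lemma Csum_weighted_inverse ys z : off_nodes ys z ->
  Csum (map (fun y => y / (z - y)) ys) = z * node_logderiv ys z - RtoC (INR (length ys)).
Proof.
  unfold node_logderiv, Csum. induction ys as [|y ys IH]; intros Hoff; cbn [map fold_right length].
  - simpl. ring.
  - rewrite IH by (intros w Hw; apply Hoff; now right).
    rewrite S_INR, RtoC_plus. field. apply Hoff. now left.
Qed.

Lemma dd_integrand_weighted_sum t a xs r th : encloses r (a :: xs) ->
  Csum (map (fun y => y * dd_integrand t ((a :: xs) ++ [y]) r th) (a :: xs)) =
  (RtoC t * a - RtoC (INR (length xs))) * dd_integrand t (a :: xs) r th
  + RtoC t * dd_integrand t xs r th
  - Ci * circle r th * dd_kernel t (a :: xs) (circle r th)
    * ((RtoC t - node_logderiv (a :: xs) (circle r th)) * circle r th + 1).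
Proof.
  intros Hr. set (z := circle r th).
  assert (Hoff : off_nodes (a :: xs) z) by now apply encloses_off_nodes.
  assert (Ha : z - a <> 0) by (apply Hoff; now left).
  assert (HP : node_prod xs z <> 0) by (apply node_prod_neq0; intros y Hy; apply Hoff; now right).
  rewrite (map_ext_in _ (fun y => dd_kernel t (a :: xs) z * (Ci * z) * (y / (z - y)))).
  2: { intros y Hy. unfold dd_integrand, dd_kernel. fold z. rewrite node_prod_app.
       change (node_prod [y] z) with ((z - y) * 1).
       field. split; [apply Hoff, Hy | now apply node_prod_neq0]. }
  rewrite Csum_map_scal, Csum_weighted_inverse by exact Hoff.
  unfold dd_integrand, dd_kernel. fold z.
  change (node_prod (a :: xs) z) with ((z - a) * node_prod xs z).
  change (length (a :: xs)) with (S (length xs)). rewrite S_INR, RtoC_plus.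
  field. now split.
Qed.

Lemma exp_dd_weighted_sum t a xs :
  Csum (map (fun y => y * exp_dd t ((a :: xs) ++ [y])) (a :: xs)) =
  (RtoC t * a - RtoC (INR (length xs))) * exp_dd t (a :: xs) + RtoC t * exp_dd t xs.
Proof.
  set (r := enclosing_radius (a :: xs)).
  assert (Hr : encloses r (a :: xs)) by apply encloses_enclosing_radius.
  assert (Hxs : encloses r xs) by (intros y Hy; apply Hr; now right).
  assert (Happ : forall y, In y (a :: xs) -> encloses r ((a :: xs) ++ [y])).
  { intros y Hy w Hw. apply in_app_or in Hw. destruct Hw as [Hw | [<- | []]]; now apply Hr. }
  rewrite (map_ext_in _ (fun y => / (2 * RtoC PI * Ci) *
    loop_integral (fun th => y * dd_integrand t ((a :: xs) ++ [y]) r th))).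
  2: { intros y Hy. rewrite (exp_dd_radius t _ r (Happ y Hy)), loop_integral_scal; [ring|].
       intros th. continuity_C1; now apply encloses_off_nodes, Happ. }
  rewrite Csum_map_scal, <- loop_integral_Csum.
  2: { intros y th Hy. continuity_C1; now apply encloses_off_nodes, Happ. }
  set (D := fun th => Ci * circle r th * dd_kernel t (a :: xs) (circle r th)
    * ((RtoC t - node_logderiv (a :: xs) (circle r th)) * circle r th + 1)).
  assert (HD : loop_integral D = 0).
  { apply (loop_integral_derive_periodic (fun th => dd_kernel t (a :: xs) (circle r th) * circle r th)).
    - intros th. unfold D. with_eq_value; [derive_C | ].
      + now apply encloses_off_nodes.
      + cbv beta. ring.
    - intros th. unfold D. continuity_C1; now apply encloses_off_nodes.
    - now rewrite circle_periodic. }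
  transitivity (/ (2 * RtoC PI * Ci) * loop_integral (fun th =>
    (RtoC t * a - RtoC (INR (length xs))) * dd_integrand t (a :: xs) r th
    + RtoC t * dd_integrand t xs r th - D th)).
  { f_equal. apply loop_integral_ext. intros th. now apply dd_integrand_weighted_sum. }
  rewrite loop_integral_minus, loop_integral_plus, !loop_integral_scal, HD.
  - rewrite (exp_dd_radius t (a :: xs) r Hr), (exp_dd_radius t xs r Hxs). ring.
  all: intros th; try unfold D; continuity_C1; now apply encloses_off_nodes.
Qed.

Lemma loop_integral_mean_value t r :
  loop_integral (fun th => Ci * Cexp (RtoC t * circle r th)) = 2 * RtoC PI * Ci.
Proof.
  transitivity (loop_integral (fun th => Ci * Cexp (RtoC t * circle 0 th))).
  - apply (loop_integral_param_const (fun s th => Ci * Cexp (RtoC t * circle s th))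
      (fun s th => Ci * (RtoC t * circle 1 th * Cexp (RtoC t * circle s th))) (- Rabs r - 1) (Rabs r + 1)).
    + intros u th _. with_eq_value; [derive_C | cbv beta; ring].
    + intros u th _. continuity_C.
    + intros u th _. continuity_C1.
    + (* The angular primitive [e^{t z} / u] of the [u]-derivative degenerates at [u = 0]. *)
      intros u _. destruct (Req_dec u 0) as [-> | Hu].
      * apply (loop_integral_derive_periodic (fun th => RtoC t * circle 1 th)).
        -- intros th. with_eq_value; [derive_C | ].
           cbv beta. rewrite circle_0, Cmult_0_r, Cexp_0. ring.
        -- intros th. continuity_C1.
        -- now rewrite circle_periodic.
      * assert (Hu' : RtoC u <> 0) by (intros E; apply Hu, RtoC_inj, E).
        apply (loop_integral_derive_periodic (fun th => Cexp (RtoC t * circle u th) / RtoC u)).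
        -- intros th. with_eq_value; [derive_C | ].
           ++ exact Hu'.
           ++ cbv beta. rewrite (circle_scale u). field. exact Hu'.
        -- intros th. continuity_C1.
        -- now rewrite circle_periodic.
    + pose proof (Rle_abs r). pose proof (Rle_abs (- r)). rewrite Rabs_Ropp in *. lra.
    + pose proof (Rabs_pos r). lra.
  - transitivity (loop_integral (fun _ => Ci)).
    + apply loop_integral_ext. intros th. rewrite circle_0, Cmult_0_r, Cexp_0. ring.
    + unfold loop_integral. rewrite RInt_const.
      apply injective_projections; simpl; unfold scal; simpl; unfold mult; simpl; ring.
Qed.

Lemma loop_integral_shift_node t a r : (2 * Cmod a < r)%R ->
  loop_integral (fun th => Cexp (RtoC t * (circle r th - a)) / (circle r th - a) * (Ci * circle r th)) =
  loop_integral (fun th => Ci * Cexp (RtoC t * circle r th)).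
Proof.
  intros Hr.
  assert (Hoff : forall u th, (-1 < u < 2)%R -> circle r th - RtoC u * a <> 0).
  { intros u th Hu. apply (encloses_off_nodes r th [RtoC u * a]); [|now left].
    intros y [<- | []]. rewrite Cmod_mult, Cmod_R.
    assert (Rabs u < 2)%R by (apply Rabs_def1; lra). pose proof (Cmod_ge_0 a).
    pose proof (Rabs_pos u). nra. }
  set (h := fun u th => Cexp (RtoC t * (circle r th - RtoC u * a)) / (circle r th - RtoC u * a)
    * (Ci * circle r th)).
  transitivity (loop_integral (h 1%R)).
  { apply loop_integral_ext. intros th. unfold h. now rewrite Cmult_1_l. }
  transitivity (loop_integral (h 0%R)).
  2: { apply loop_integral_ext. intros th. unfold h.
       assert (Hz := Hoff 0%R th ltac:(lra)).
       replace (circle r th - RtoC 0 * a) with (circle r th) in * by ring.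
       field. exact Hz. }
  (* With [w = z - u a], the [u]-derivative of [h] is the angular derivative of [- a e^{t w} / w]. *)
  apply (loop_integral_param_const h
    (fun u th => - a * (RtoC t - / (circle r th - RtoC u * a))
       * (Cexp (RtoC t * (circle r th - RtoC u * a)) / (circle r th - RtoC u * a)) * (Ci * circle r th))
    (-1) 2); try lra.
  - intros u th Hu. unfold h. with_eq_value; [derive_C | ].
    + now apply Hoff.
    + cbv beta. field. now apply Hoff.
  - intros u th Hu. continuity_C; now apply Hoff.
  - intros u th Hu. unfold h. continuity_C1; now apply Hoff.
  - intros u Hu.
    apply (loop_integral_derive_periodic
      (fun th => - a * (Cexp (RtoC t * (circle r th - RtoC u * a)) / (circle r th - RtoC u * a)))).
    + intros th. with_eq_value; [derive_C | ].
      * now apply Hoff.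
      * cbv beta. field. now apply Hoff.
    + intros th. continuity_C1; now apply Hoff.
    + now rewrite circle_periodic.
Qed.

Lemma exp_dd_singleton t a : exp_dd t [a] = Cexp (RtoC t * a).
Proof.
  set (r := (1 + 2 * Cmod a)%R).
  assert (Hr : encloses r [a]) by (intros y [<- | []]; unfold r; pose proof (Cmod_ge_0 a); lra).
  rewrite (exp_dd_radius t [a] r Hr).
  rewrite (loop_integral_ext _ (fun th => Cexp (RtoC t * a) *
    (Cexp (RtoC t * (circle r th - a)) / (circle r th - a) * (Ci * circle r th)))).
  2: { intros th. assert (Hz : circle r th - a <> 0) by (apply (encloses_off_nodes r th [a] Hr); now left).
       unfold dd_integrand, dd_kernel. change (node_prod [a] _) with ((circle r th - a) * 1).
       replace (RtoC t * circle r th) with (RtoC t * a + RtoC t * (circle r th - a)) by ring.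
       rewrite Cexp_add. field. exact Hz. }
  rewrite loop_integral_scal, loop_integral_shift_node, loop_integral_mean_value.
  - field. split; [exact Ci_nz | intros E; apply PI_neq0, RtoC_inj, E].
  - unfold r. pose proof (Cmod_ge_0 a). lra.
  - intros th. continuity_C1; apply (encloses_off_nodes r _ [a] Hr); now left.
Qed.

Lemma exp_dd_nil t : RtoC t * exp_dd t [] = 0.
Proof.
  rewrite (exp_dd_radius t [] 1%R) by easy.
  transitivity (/ (2 * RtoC PI * Ci) * loop_integral (fun th => RtoC t * dd_integrand t [] 1%R th)).
  { rewrite loop_integral_scal; [ring | intros th; continuity_C1; easy]. }
  rewrite (loop_integral_derive_periodic (fun th => Cexp (RtoC t * circle 1 th))); [ring | | |].
  - intros th. with_eq_value; [derive_C | ].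
    unfold dd_integrand, dd_kernel. change (node_prod [] _) with (RtoC 1). cbv beta. field.
  - intros th. continuity_C1; easy.
  - now rewrite circle_periodic.
Qed.

Theorem corollary1 (q : nat) (x : nat -> C) (tau : R) :
  let xs := map x (seq 0 (S q)) in
  let lhs := Csum (map (fun j => x j * exp_dd (- tau) (xs ++ [x j])) (seq 0 (S q))) in
  ((0 < q)%nat ->
     lhs = (- x 0%nat * RtoC tau - RtoC (INR q)) * exp_dd (- tau) xs
           - RtoC tau * exp_dd (- tau) (map x (seq 1 q))) /\
  (q = 0%nat ->
     lhs = - RtoC tau * x 0%nat * Cexp (RtoC (- tau) * x 0%nat)).
Proof.
  cbv zeta.
  rewrite <- (map_map x (fun y => y * exp_dd (- tau) (map x (seq 0 (S q)) ++ [y]))).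
  change (map x (seq 0 (S q))) with (x 0%nat :: map x (seq 1 q)).
  rewrite exp_dd_weighted_sum, length_map, length_seq.
  split; intros Hq.
  - rewrite RtoC_opp. ring.
  - subst q. cbn [map seq]. rewrite exp_dd_singleton, exp_dd_nil, RtoC_opp.
    change (INR 0) with 0%R. ring.
Qed.
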